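(* Let $(G,r)$ be a symmetric group, $r(a,b)=({}^ab,a^b)$, which is not the trivial solution, and let $(G,+,\cdot)$ be its associated left brace. The following are equivalent: (1) $(G,r)$ is a multipermutation solution of level $2$; (2) $G$ acts upon itself from the left as automorphisms: ${}^a(bc)=({}^ab)({}^ac)$ for all $a,b,c\in G$; (3) at least one (equivalently, each) of the following identities holds for all $a,b\in G$: (i) $\mathcal{L}_{{}^ba}=\mathcal{L}_a$; (ii) $\mathcal{L}_{a^b}=\mathcal{L}_a$; (iii) $\mathcal{R}_{{}^ba}=\mathcal{R}_a$; (iv) $\mathcal{R}_{a^b}=\mathcal{R}_a$. Moreover, each of these conditions implies that $(G,r)$ satisfies lri and the cyclic conditions, and that the brace satisfies Raut.
   Context: A symmetric group is $(G,r)$, $G$ a group, $r(u,v)=({}^uv,u^v)$ an involutive bijection of $G\times G$ with ${}^a1=1,{}^1u=u,1^u=1,a^1=a$, ${}^{ab}u={}^a({}^bu)$, $a^{uv}=(a^u)^v$, ${}^a(uv)=({}^au)({}^{a^u}v)$, $(ab)^u=(a^{{}^bu})(b^u)$, $uv=({}^uv)(u^v)$; it is a non-degenerate involutive set-theoretic solution of the Yang–Baxter equation. $\mathcal{L}_a(b)={}^ab$, $\mathcal{R}_a(b)=b^a$. The trivial solution means $r(a,b)=(b,a)$. The associated left brace has $a+b:=a({}^{a^{-1}}b)$. lri: $({}^ab)^a=b={}^a(b^a)$ for all $a,b$. Cyclic conditions: ${}^{(b^a)}a={}^ba$, $a^{({}^ab)}=a^b$, ${}^{({}^ab)}a={}^ba$,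 $a^{(b^a)}=a^b$ for all $a,b$. Raut: $(a+b)^c=a^c+b^c$. Retraction: classes of $a\sim b$ iff $\mathcal{L}_a=\mathcal{L}_b$ with induced map; $\mathrm{mpl}=m$ iff $m$ is minimal such that the $m$-fold iterated retraction has one element. *)

(* an abstract (possibly infinite) group given by its carrier
   and operations, with the symmetric-group structure given by the two actions
   lact a b = ^a b   and   ract a b = a^b,   so that r(a,b) = (lact a b, ract a b). *)

Set Implicit Arguments.

Record IsSymGroup (G : Type) (mul : G -> G -> G) (one : G) (inv : G -> G)
    (lact ract : G -> G -> G) : Prop := {
  sg_assoc : forall a b c, mul (mul a b) c = mul a (mul b c);
  sg_mul1l : forall a, mul one a = a;
  sg_mul1r : forall a, mul a one = a;
  sg_mulVl : forall a, mul (inv a) a = one;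
  sg_mulVr : forall a, mul a (inv a) = one;
  sg_invol : forall a b,
      lact (lact a b) (ract a b) = a /\ ract (lact a b) (ract a b) = b;
  sg_lact_a1 : forall a, lact a one = one;
  sg_lact_1u : forall u, lact one u = u;
  sg_ract_1u : forall u, ract one u = one;
  sg_ract_a1 : forall a, ract a one = a;
  sg_lact_mul : forall a b u, lact (mul a b) u = lact a (lact b u);
  sg_ract_mul : forall a u v, ract a (mul u v) = ract (ract a u) v;
  sg_ML1 : forall a u v, lact a (mul u v) = mul (lact a u) (lact (ract a u) v);
  sg_MR1 : forall a b u, ract (mul a b) u = mul (ract a (lact b u)) (ract b u);
  sg_M3 : forall u v, mul u v = mul (lact u v) (ract u v)
}.

Definition trivial_solution (G : Type) (lact ract : G -> G -> G) : Prop :=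
  forall a b, lact a b = b /\ ract a b = a.

(* Iterated retraction, described by the equivalence relation on G whose
   classes are the elements of the k-fold retraction:
   retEq 0 = equality; two elements are identified at level k+1 iff their
   induced left actions on the k-fold retraction coincide, i.e.
   forall z, [^x z]_k = [^y z]_k. *)
Fixpoint retEq (G : Type) (lact : G -> G -> G) (k : nat) : G -> G -> Prop :=
  match k with
  | O => fun x y => x = y
  | S k' => fun x y => forall z, retEq lact k' (lact x z) (lact y z)
  end.

Definition ret_one_elem (G : Type) (lact : G -> G -> G) (k : nat) : Prop :=
  forall x y, retEq lact k x y.

Definition mpl (G : Type) (lact : G -> G -> G) (m : nat) : Prop :=
  ret_one_elem lact m /\ (forall k, k < m -> ~ ret_one_elem lact k).

Definition brace_add (G : Type) (mul : G -> G -> G) (inv : G -> G)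
    (lact : G -> G -> G) (a b : G) : G :=
  mul a (lact (inv a) b).

Definition lri (G : Type) (lact ract : G -> G -> G) : Prop :=
  forall a b, ract (lact a b) a = b /\ lact a (ract b a) = b.

Definition cyclic_conditions (G : Type) (lact ract : G -> G -> G) : Prop :=
  forall a b,
    lact (ract b a) a = lact b a /\
    ract a (lact a b) = ract a b /\
    lact (lact a b) a = lact b a /\
    ract a (ract b a) = ract a b.

Definition Raut (G : Type) (mul : G -> G -> G) (inv : G -> G)
    (lact ract : G -> G -> G) : Prop :=
  forall a b c,
    ract (brace_add mul inv lact a b) c =
    brace_add mul inv lact (ract a c) (ract b c).

From Stdlib Require Import FunctionalExtensionality Lia.

(* Involutivity of r makes a function of a invariant under a |-> ^b a iff it
   is invariant under a |-> a^b.  Under (i), involutivity also gives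
   x^y = ^{y^-1} x, so the right actions are left actions by inverses and (iii)
   follows from (i); dually (iv) gives ^x y = y^{x^-1} and hence (i).  The
   compatibility ^a(uv) = (^a u)(^{a^u} v) identifies (2) with (ii), and the
   2-fold retraction is a point exactly when L_{^b a} = L_a (the levels 0 and 1
   would force r to be the flip).  For Raut, the right actions become left
   actions, and these commute because uv = (^u v)(u^v). *)

Set Implicit Arguments.

Section SymmetricGroup.

Variables (G : Type) (mul : G -> G -> G) (one : G) (inv : G -> G)
  (lact ract : G -> G -> G).
Hypothesis HG : IsSymGroup mul one inv lact ract.

Local Notation ract_by a := (fun c => ract c a).

Lemma lact_invK z x : lact (inv z) (lact z x) = x.
Proof. rewrite <- (sg_lact_mul HG), (sg_mulVl HG). apply (sg_lact_1u HG). Qed.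

Lemma lact_Kinv z x : lact z (lact (inv z) x) = x.
Proof. rewrite <- (sg_lact_mul HG), (sg_mulVr HG). apply (sg_lact_1u HG). Qed.

Lemma ract_Kinv z x : ract (ract x z) (inv z) = x.
Proof. rewrite <- (sg_ract_mul HG), (sg_mulVr HG). apply (sg_ract_a1 HG). Qed.

Lemma ract_invK z x : ract (ract x (inv z)) z = x.
Proof. rewrite <- (sg_ract_mul HG), (sg_mulVl HG). apply (sg_ract_a1 HG). Qed.

Lemma mul_cancel_l x y z : mul x y = mul x z -> y = z.
Proof.
  intro E.
  rewrite <- (sg_mul1l HG y), <- (sg_mul1l HG z), <- (sg_mulVl HG x),
    !(sg_assoc HG), E.
  reflexivity.
Qed.

Lemma lact_inv_congr x y : lact x = lact y -> lact (inv x) = lact (inv y).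
Proof.
  intro E; extensionality c.
  rewrite <- (lact_invK y (lact (inv x) c)), <- E, lact_Kinv.
  reflexivity.
Qed.

Lemma ract_inv_congr x y : ract_by x = ract_by y -> ract_by (inv x) = ract_by (inv y).
Proof.
  intro E; extensionality c.
  assert (E' : forall w, ract w x = ract w y) by exact (equal_f E).
  rewrite <- (ract_Kinv y (ract c (inv x))), <- E', ract_invK.
  reflexivity.
Qed.

Lemma invariant_lact_iff_ract (X : Type) (phi : G -> X) :
  (forall a b, phi (lact b a) = phi a) <-> (forall a b, phi (ract a b) = phi a).
Proof.
  split; intros H a b.
  - destruct (sg_invol HG a b) as [E _].
    rewrite <- (H (ract a b) (lact a b)), E.
    reflexivity.
  - destruct (sg_invol HG b a) as [_ E].
    rewrite <- (H (lact b a) (ract b a)), E.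
    reflexivity.
Qed.

Lemma lact_hom_iff_lact_ract_invariant :
  (forall a b c, lact a (mul b c) = mul (lact a b) (lact a c)) <->
  (forall a b, lact (ract a b) = lact a).
Proof.
  split; intros H a b.
  - extensionality c.
    apply (mul_cancel_l (x := lact a b)).
    rewrite <- (sg_ML1 HG), H.
    reflexivity.
  - intro c.
    rewrite (sg_ML1 HG), H.
    reflexivity.
Qed.

Lemma ract_eq_lact_inv (Hl : forall a b, lact (lact b a) = lact a) x y :
  ract x y = lact (inv y) x.
Proof.
  destruct (sg_invol HG x y) as [E _].
  rewrite Hl in E.
  rewrite <- (lact_invK y (ract x y)), E.
  reflexivity.
Qed.

Lemma lact_eq_ract_inv (Hr : forall a b, ract_by (ract a b) = ract_by a) x y :
  lact x y = ract y (inv x).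
Proof.
  destruct (sg_invol HG x y) as [_ E].
  assert (Hr' : forall c, ract c (ract x y) = ract c x) by exact (equal_f (Hr x y)).
  rewrite Hr' in E.
  rewrite <- (ract_Kinv x (lact x y)), E.
  reflexivity.
Qed.

Lemma lact_invariant_ract_invariant :
  (forall a b, lact (lact b a) = lact a) ->
  forall a b, ract_by (lact b a) = ract_by a.
Proof.
  intros Hl a b; extensionality c.
  rewrite !(ract_eq_lact_inv Hl), (lact_inv_congr (Hl a b)).
  reflexivity.
Qed.

Lemma ract_invariant_lact_invariant :
  (forall a b, ract_by (ract a b) = ract_by a) ->
  forall a b, lact (lact b a) = lact a.
Proof.
  intros Hr a b; extensionality c.
  assert (Hr3 : ract_by (lact b a) = ract_by a)
    by exact (proj2 (invariant_lact_iff_ract (fun a c => ract c a)) Hr a b).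
  rewrite (lact_eq_ract_inv Hr (lact b a)), (lact_eq_ract_inv Hr a).
  exact (equal_f (ract_inv_congr Hr3) c).
Qed.

Lemma ret_one_elem2_iff :
  ret_one_elem lact 2 <-> forall a b, lact (lact b a) = lact a.
Proof.
  unfold ret_one_elem; simpl; split.
  - intros H a b; extensionality c.
    rewrite (H b one a c), (sg_lact_1u HG).
    reflexivity.
  - intros Hl x y z w.
    rewrite !Hl.
    reflexivity.
Qed.

Lemma ret_one_elem1_trivial : ret_one_elem lact 1 -> trivial_solution lact ract.
Proof.
  intros H.
  assert (Hid : forall x z, lact x z = z).
  { intros x z. rewrite (H x one z). apply (sg_lact_1u HG). }
  assert (Hl : forall a b, lact (lact b a) = lact a).
  { intros a b; extensionality c. rewrite !Hid. reflexivity. }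
  intros a b; split.
  - apply Hid.
  - rewrite (ract_eq_lact_inv Hl), Hid. reflexivity.
Qed.

Lemma mpl2_iff_ret_one_elem2 :
  ~ trivial_solution lact ract -> (mpl lact 2 <-> ret_one_elem lact 2).
Proof.
  intros Hnt; split; [intros [H _]; exact H |].
  intros H; split; [exact H |].
  intros [|[|k]] Hk Hret.
  - apply Hnt; intros a b; split; apply Hret.
  - exact (Hnt (ret_one_elem1_trivial Hret)).
  - lia.
Qed.

Section Level2.

Hypothesis Hl : forall a b, lact (lact b a) = lact a.

Let lact_ract_invariant : forall a b, lact (ract a b) = lact a :=
  proj1 (invariant_lact_iff_ract lact) Hl.

Let ract_lact_invariant : forall a b, ract_by (lact b a) = ract_by a :=
  lact_invariant_ract_invariant Hl.

Lemma lact_comm u v x : lact u (lact v x) = lact v (lact u x).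
Proof.
  rewrite <- (sg_lact_mul HG), (sg_M3 HG), (sg_lact_mul HG), Hl,
    lact_ract_invariant.
  reflexivity.
Qed.

Lemma lri_of_level2 : lri lact ract.
Proof.
  intros a b; rewrite !(ract_eq_lact_inv Hl).
  split; [apply lact_invK | apply lact_Kinv].
Qed.

Lemma cyclic_conditions_of_level2 : cyclic_conditions lact ract.
Proof.
  intros a b; repeat split.
  - rewrite lact_ract_invariant. reflexivity.
  - exact (equal_f (ract_lact_invariant b a) a).
  - rewrite Hl. reflexivity.
  - exact (equal_f (proj1 (invariant_lact_iff_ract (fun a c => ract c a))
                     ract_lact_invariant b a) a).
Qed.

Lemma Raut_of_level2 : Raut mul inv lact ract.
Proof.
  intros a b c; unfold brace_add.
  rewrite (sg_MR1 HG).
  assert (Ha : ract a (lact (lact (inv a) b) c) = ract a c)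
    by exact (equal_f (ract_lact_invariant c _) a).
  rewrite Ha; f_equal.
  rewrite !(ract_eq_lact_inv Hl), (lact_inv_congr (Hl a (inv c))).
  apply lact_comm.
Qed.

End Level2.

End SymmetricGroup.

Theorem mainTheorem14 (G : Type) (mul : G -> G -> G) (one : G) (inv : G -> G)
    (lact ract : G -> G -> G)
    (HG : IsSymGroup mul one inv lact ract)
    (Hnontriv : ~ trivial_solution lact ract) :
  let L := fun a : G => lact a in
  let R := fun a : G => (fun b : G => ract b a) in
  let cond2 := forall a b c, lact a (mul b c) = mul (lact a b) (lact a c) in
  ((mpl lact 2 <-> cond2) /\
   (cond2 <-> (forall a b, L (lact b a) = L a)) /\
   (cond2 <-> (forall a b, L (ract a b) = L a)) /\
   (cond2 <-> (forall a b, R (lact b a) = R a)) /\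
   (cond2 <-> (forall a b, R (ract a b) = R a))) /\
  (cond2 -> lri lact ract /\ cyclic_conditions lact ract /\ Raut mul inv lact ract).
Proof.
  cbv zeta beta.
  pose proof (mpl2_iff_ret_one_elem2 HG Hnontriv) as mpl_ret.
  pose proof (ret_one_elem2_iff HG) as ret_i.
  pose proof (lact_hom_iff_lact_ract_invariant HG) as hom_ii.
  pose proof (invariant_lact_iff_ract HG lact) as i_ii.
  pose proof (invariant_lact_iff_ract HG (fun a c => ract c a)) as iii_iv.
  pose proof (lact_invariant_ract_invariant HG) as i_iii.
  pose proof (ract_invariant_lact_invariant HG) as iv_i.
  split; [tauto |].
  intros Hhom.
  assert (Hl : forall a b, lact (lact b a) = lact a) by tauto.
  exact (conj (lri_of_level2 HG Hl)
           (conj (cyclic_conditions_of_level2 HG Hl) (Raut_of_level2 HG Hl))).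
Qed.
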